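(* Let $w=\mu^{\omega}(a)$ where $\mu$ is an injective $r$-uniform morphism ($r\ge2$) on a finite alphabet, prolongable on the letter $a$. If $w$ is periodic, then no letter appears twice in the minimal repeating unit of $w$ (the shortest word $t$ with $w=t^{\omega}$).
   Context: A morphism $\mu$ satisfies $\mu(uv)=\mu(u)\mu(v)$ for finite $u$; it is $r$-uniform if $|\mu(b)|=r$ for all letters $b$; prolongable on $a$ means $\mu(a)$ begins with $a$, and $\mu^{\omega}(a)$ is the infinite word having every $\mu^n(a)$ as a prefix. *)

From mathcomp Require Import all_boot.
Set Implicit Arguments. Unset Strict Implicit. Unset Printing Implicit Defensive.

Definition morph_word (A : Type) (mu : A -> seq A) (u : seq A) : seq A :=
  flatten (map mu u).

Definition morph_iter (A : Type) (mu : A -> seq A) (n : nat) (u : seq A) : seq A :=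
  iter n (morph_word mu) u.

Definition uniform (A : Type) (mu : A -> seq A) (r : nat) : Prop :=
  forall b, size (mu b) = r.

Definition prolongable (A : Type) (mu : A -> seq A) (a : A) : Prop :=
  exists u, mu a = a :: u.

(* w is mu^omega(a): every mu^n(a) is a prefix of w *)
Definition is_fixed_point_from (A : Type) (mu : A -> seq A) (a : A) (w : nat -> A) : Prop :=
  forall n i, i < size (morph_iter mu n [:: a]) -> w i = nth a (morph_iter mu n [:: a]) i.

Definition has_period (A : Type) (w : nat -> A) (p : nat) : Prop :=
  0 < p /\ forall i, w (i + p) = w i.

Definition periodic (A : Type) (w : nat -> A) : Prop := exists p, has_period w p.

From mathcomp Require Import all_boot.
From mathcomp Require Import zify.

Set Implicit Arguments.
Unset Strict Implicit.
Unset Printing Implicit Defensive.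

(* Since mu is r-uniform, the fixed point w is built from blocks: positions
   r*i, ..., r*i + r - 1 of w spell mu (w i), and iterating, positions
   r^n*i, ..., r^n*i + r^n - 1 are determined by the letter w i alone.
   Hence if w s = w t then w agrees with itself shifted by r^n*(t - s) from
   r^n*s onwards; choosing r^n > p and using the periodicity, r^n*(t - s) is a
   period, so the minimal period p divides r^n*(t - s).  Injectivity of mu
   lets periods be divided by r, which forces p to be coprime to r; thus p
   divides t - s, and two positions of one period never carry the same
   letter. *)

Section UniformMorphism.

Variables (A : Type) (mu : A -> seq A) (r : nat).
Hypothesis mu_unif : uniform mu r.

Lemma size_morph_word (u : seq A) : size (morph_word mu u) = r * size u.
Proof.
elim: u => [|x u IHu] /=; first by rewrite muln0.
by rewrite size_cat mu_unif -/(morph_word mu u) IHu mulnS.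
Qed.

Lemma size_morph_iter n (u : seq A) : size (morph_iter mu n u) = r ^ n * size u.
Proof.
elim: n => [|n IHn]; first by rewrite mul1n.
by rewrite /morph_iter iterS size_morph_word -/(morph_iter mu n u) IHn expnS mulnA.
Qed.

Lemma nth_morph_word (x0 : A) (u : seq A) i k :
  i < size u -> k < r -> nth x0 (morph_word mu u) (r * i + k) = nth x0 (mu (nth x0 u i)) k.
Proof.
move=> + lt_k_r; elim: u i => [|x u IHu] [|i] //= lt_i_u.
  by rewrite muln0 add0n nth_cat mu_unif lt_k_r.
rewrite nth_cat mu_unif mulnS -addnA ltnNge leq_addr /= addKn.
exact: IHu.
Qed.

End UniformMorphism.

Lemma injective_morph_word_letter (A : Type) (mu : A -> seq A) :
  injective (morph_word mu) -> injective mu.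
Proof.
move=> inj_mw x y mu_xy; have : morph_word mu [:: x] = morph_word mu [:: y].
  by rewrite /morph_word /= mu_xy.
by move/inj_mw => [].
Qed.

Section Periodic.

Variables (A : Type) (w : nat -> A) (p : nat).
Hypothesis w_per : has_period w p.

Lemma has_periodMn m i : w (i + m * p) = w i.
Proof.
case: w_per => _ wp; elim: m i => [|m IHm] i; first by rewrite mul0n addn0.
by rewrite mulSn (addnC p) addnA wp IHm.
Qed.

(* Move both sides forward by the multiple c * p of the period, beyond position c. *)
Lemma period_from_shift c d :
  (forall j, w (c + j + d) = w (c + j)) -> forall i, w (i + d) = w i.
Proof.
case: w_per => p_gt0 _ shift_cd i.
have cpE : c * p = c + c * p.-1 by rewrite -{1}(prednK p_gt0) mulnS.
rewrite -(has_periodMn c i) -(has_periodMn c (i + d)) cpE.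
have -> : i + d + (c + c * p.-1) = c + (i + c * p.-1) + d by lia.
by rewrite shift_cd addnCA.
Qed.

Hypothesis p_min : forall q, has_period w q -> p <= q.

Lemma minimal_period_dvd q : (forall i, w (i + q) = w i) -> p %| q.
Proof.
move=> wq; have p_gt0 : 0 < p by case: w_per.
have wqp i : w (i + q %% p) = w i.
  by rewrite -(has_periodMn (q %/ p)) -addnA (addnC (q %% p)) -divn_eq wq.
rewrite /dvdn; case: (posnP (q %% p)) => [|qp_gt0] //.
by have := p_min (conj qp_gt0 wqp); rewrite leqNgt ltn_pmod.
Qed.

End Periodic.

Section FixedPoint.

Variables (A : Type) (mu : A -> seq A) (r : nat) (a : A) (w : nat -> A).
Hypotheses (r_gt1 : 1 < r) (mu_unif : uniform mu r).
Hypothesis w_fix : is_fixed_point_from mu a w.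

Lemma fixed_point_block i k : k < r -> w (r * i + k) = nth a (mu (w i)) k.
Proof.
move=> lt_k_r.
have size_iter n : size (morph_iter mu n [:: a]) = r ^ n.
  by rewrite (size_morph_iter mu_unif) muln1.
have lt_i_ri : i < r ^ i := ltn_expl i r_gt1.
have lt_rik : r * i + k < r ^ i.+1.
  by rewrite expnS; apply: leq_trans (leq_mul (leqnn r) lt_i_ri); rewrite mulnS addnC ltn_add2r.
rewrite (@w_fix i i) ?size_iter // (@w_fix i.+1 (r * i + k)) ?size_iter //.
by rewrite /morph_iter iterS nth_morph_word ?size_iter.
Qed.

Lemma fixed_point_blockX s t n k :
  w s = w t -> k < r ^ n -> w (r ^ n * s + k) = w (r ^ n * t + k).
Proof.
move=> wst; elim: n k => [|n IHn] k.
  by rewrite expn0 ltnS leqn0 => /eqP ->; rewrite !mul1n !addn0.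
have r_gt0 : 0 < r by apply: ltnW.
move=> lt_k_rn; have blockE x : r ^ n.+1 * x + k = r * (r ^ n * x + k %/ r) + k %% r.
  by rewrite {1}(divn_eq k r) mulnDr mulnA -expnS addnA (mulnC r (k %/ r)).
rewrite !blockE !fixed_point_block ?ltn_pmod // IHn //.
by rewrite ltn_divLR // -expnSr.
Qed.

Hypothesis mu_inj : injective mu.

Lemma fixed_point_period_divr d :
  (forall i, w (i + r * d) = w i) -> forall i, w (i + d) = w i.
Proof.
move=> w_rd i; apply: mu_inj; apply: (eq_from_nth (x0 := a)); first by rewrite !mu_unif.
move=> k; rewrite mu_unif => lt_k_r.
by rewrite -!fixed_point_block // mulnDr addnAC w_rd.
Qed.

Variable p : nat.
Hypotheses (w_per : has_period w p) (p_min : forall q, has_period w q -> p <= q).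

(* With g = gcd r p, the shift r * (p / g) = (r / g) * p is a period, so p / g is one. *)
Lemma coprime_minimal_period : coprime r p.
Proof.
have p_gt0 : 0 < p by case: w_per.
set g := gcdn r p; have g_gt0 : 0 < g by rewrite gcdn_gt0 p_gt0 orbT.
have w_pg : forall i, w (i + p %/ g) = w i.
  apply: fixed_point_period_divr => i.
  have -> : r * (p %/ g) = r %/ g * p.
    by rewrite muln_divA ?dvdn_gcdr // divn_mulAC ?dvdn_gcdl.
  exact: has_periodMn.
have pg_gt0 : 0 < p %/ g by rewrite divn_gt0 // dvdn_leq // dvdn_gcdr.
rewrite /coprime eqn_leq g_gt0 andbT leqNgt; apply/negP => g_gt1.
have := dvdn_leq pg_gt0 (minimal_period_dvd w_per p_min w_pg).
by rewrite leqNgt ltn_Pdiv.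
Qed.

Lemma minimal_period_letters_neq s t : s < t -> t < p -> w s <> w t.
Proof.
move=> lt_st lt_tp wst; have p_gt0 : 0 < p by case: w_per.
set N := r ^ p; have lt_pN : p < N := ltn_expl p r_gt1.
have shiftN j : w (N * s + j + N * (t - s)) = w (N * s + j).
  have lt_jN : j %% p < N := ltn_trans (ltn_pmod j p_gt0) lt_pN.
  rewrite addnAC -mulnDr (subnKC (ltnW lt_st)) (divn_eq j p).
  rewrite addnA (addnAC (N * t)) addnA (addnAC (N * s)) !(has_periodMn w_per (j %/ p)).
  by apply/esym/(fixed_point_blockX (n := p)).
have := minimal_period_dvd w_per p_min (period_from_shift w_per shiftN).
rewrite Gauss_dvdr; last by rewrite coprime_sym /N; apply: coprimeXl; apply: coprime_minimal_period.
by move/dvdn_leq; rewrite subn_gt0 => /(_ lt_st); lia.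
Qed.

End FixedPoint.

Theorem theorem13 (A : finType) (mu : A -> seq A) (r : nat) (a : A) (w : nat -> A) :
  2 <= r ->
  uniform mu r ->
  injective (morph_word mu) ->
  prolongable mu a ->
  is_fixed_point_from mu a w ->
  periodic w ->
  forall p : nat,
    has_period w p ->
    (forall q, has_period w q -> p <= q) ->
    uniq (mkseq w p).
Proof.
(* Prolongability is implied by the fixed-point hypothesis, and periodicity by has_period w p. *)
move=> r_gt1 mu_unif inj_mw _ w_fix _ p w_per p_min.
have letters_neq := minimal_period_letters_neq r_gt1 mu_unif w_fix
  (injective_morph_word_letter inj_mw) w_per p_min.
rewrite map_inj_in_uniq ?iota_uniq // => s t; rewrite !mem_iota !add0n => lt_sp lt_tp wst.
case: (ltngtP s t) => // [lt_st | lt_ts]; first by case: (letters_neq _ _ lt_st lt_tp wst).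
by case: (letters_neq _ _ lt_ts lt_sp (esym wst)).
Qed.
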